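(* For every integer $n\ge 6$, the set $\mathcal{MUC}(n,3)$ is nonempty, and $\ell(n,3)\le \frac{7n}{3}-4$.
   Context: A bi-hypergraph $\mathcal H=(V,E)$ consists of a finite vertex set $V$ and a set $E$ of subsets of $V$, called edges, with no edge contained in another. It is $r$-uniform if every edge has exactly $r$ elements. A mapping $f:V\to\mathbb N$ is a proper coloring of $\mathcal H$ if $1<|f(e)|<|e|$ for every $e\in E$, where $f(e)=\{f(v):v\in e\}$. $\mathcal H$ is colorable if it has a proper coloring, and uncolorable otherwise. A subhypergraph of $\mathcal H$ is a bi-hypergraph $(V',E')$ with $V'\subseteq V$, $E'\subseteq E$. $\mathcal H$ is minimal uncolorable if it is uncolorable but every proper subhypergraph of it is colorable. $\mathcal{MUC}(n,r)$ is the set of minimal uncolorable $r$-uniform bi-hypergraphs with exactly $n$ vertices, and $\ell(n,r)$ is the minimum number of edges of a member of $\mathcal{MUC}(n,r)$ (and $\ell(n,r)=\infty$ if $\mathcal{MUC}(n,r)=\emptyset$). *)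

From mathcomp Require Import all_boot.
Set Implicit Arguments. Unset Strict Implicit. Unset Printing Implicit Defensive.

Definition is_bihypergraph (T : finType) (V : {set T}) (E : {set {set T}}) :=
  (forall e, e \in E -> e \subset V) /\
  (forall e e', e \in E -> e' \in E -> e \subset e' -> e = e').

Definition uniform (T : finType) (r : nat) (E : {set {set T}}) :=
  forall e, e \in E -> #|e| = r.

(* f : V -> N is a proper coloring: 1 < |f(e)| < |e| for every edge e,
   where |f(e)| = number of distinct values of f on e.
   (Values of f outside V are irrelevant, since edges lie inside V.) *)
Definition proper_coloring (T : finType) (E : {set {set T}}) (f : T -> nat) :=
  forall e, e \in E -> 1 < size (undup [seq f x | x <- enum e]) < #|e|.

Definition colorable (T : finType) (E : {set {set T}}) :=
  exists f : T -> nat, proper_coloring E f.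

Definition subhypergraph (T : finType) (V' : {set T}) (E' : {set {set T}})
  (V : {set T}) (E : {set {set T}}) :=
  is_bihypergraph V' E' /\ V' \subset V /\ E' \subset E.

Definition minimal_uncolorable (T : finType) (V : {set T}) (E : {set {set T}}) :=
  is_bihypergraph V E /\ ~ colorable E /\
  (forall V' E', subhypergraph V' E' V E -> (V', E') <> (V, E) -> colorable E').

Definition in_MUC (n r : nat) (E : {set {set 'I_n}}) :=
  uniform r E /\ minimal_uncolorable [set: 'I_n] E.

From mathcomp Require Import all_boot zify.
Set Implicit Arguments. Unset Strict Implicit. Unset Printing Implicit Defensive.

(* In a proper coloring every edge of size 3 gets exactly two colors.  Call a
   3-uniform hypergraph critical if it is uncolorable, covers every vertex, and
   becomes colorable when any edge is deleted; critical hypergraphs are minimal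
   uncolorable.  On three fresh vertices x, y, z the gadget with edges abx, aby,
   abz, cxy, cxz, xyz gives a, b, c exactly two colors in every proper coloring,
   every coloring of a, b, c with two colors extends to it, and every other
   coloring of a, b, c extends to the gadget minus any one edge.  So replacing an
   edge abc of a critical hypergraph by the gadget keeps it critical and adds 3
   vertices and 5 edges, which preserves 3|E| <= 7n - 12.  Critical hypergraphs
   on 6, 7 and 8 vertices with 10, 12 and 13 edges, verified by exhaustive
   search, start the induction. *)

Definition proper3 (x y z : nat) := 1 < size (undup [:: x; y; z]) < 3.
Arguments proper3 : simpl never.

Lemma proper3E x y z :
  proper3 x y z = ((x == y) || (y == z) || (x == z)) && ~~ ((x == y) && (y == z)).
Proof.
rewrite /proper3 /= !inE.
case: (boolP (x == y)) => exy; case: (boolP (y == z)) => eyz;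
  case: (boolP (x == z)) => exz; rewrite /= ?inE ?exy ?eyz ?exz //=; lia.
Qed.

Notation triple := (nat * nat * nat)%type.
Definition triple_lt k (t : triple) := [&& t.1.1 < k, t.1.2 < k & t.2 < k].
Definition triple_uniq k (t : triple) := triple_lt k t && uniq [:: t.1.1; t.1.2; t.2].

Definition proper_at (s : seq nat) (t : triple) :=
  proper3 (nth 0 s t.1.1) (nth 0 s t.1.2) (nth 0 s t.2).
Definition proper_all s (l : seq triple) := all (proper_at s) l.
Definition proper_known s (l : seq triple) :=
  all (fun t => triple_lt (size s) t ==> proper_at s t) l.

Lemma proper_at_eq s s' k t : triple_lt k t ->
  (forall i, i < k -> nth 0 s i = nth 0 s' i) -> proper_at s t = proper_at s' t.
Proof. by case/and3P=> t1 t2 t3 ss'; rewrite /proper_at !ss'. Qed.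

Lemma proper_known_catl s s' l : proper_known (s ++ s') l -> proper_known s l.
Proof.
move/allP=> known; apply/allP=> t tl; apply/implyP=> ts.
have ts' : triple_lt (size (s ++ s')) t.
  by move: ts; rewrite /triple_lt size_cat => /and3P[? ? ?]; apply/and3P; split; lia.
rewrite (@proper_at_eq s (s ++ s') (size s)) // ?(implyP (known t tl)) // => i lt_is.
by rewrite nth_cat lt_is.
Qed.

Lemma proper_all_known s l : proper_all s l -> proper_known s l.
Proof. by move/allP=> proper_s; apply/allP=> t /proper_s ->; rewrite implybT. Qed.

Fixpoint forces_from (n : nat) (l F : seq triple) (k : nat) (s : seq nat) : bool :=
  if ~~ proper_known s l then true else
  if k is k'.+1 then all (fun v => forces_from n l F k' (rcons s v)) (iota 0 n)
  else proper_all s F.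

Definition forces n l F := forces_from n l F n [::].

Lemma forces_fromP n l F k s : forces_from n l F k s -> forall s',
  size s' = k -> all (fun v => v < n) s' -> proper_known (s ++ s') l -> proper_all (s ++ s') F.
Proof.
elim: k s => [|k IH] s /= search.
  by move=> [|//] _ _; rewrite cats0 => known; rewrite known in search.
move=> [//|v s'] [size_s'] /= /andP[vn s'n] known.
rewrite (proper_known_catl known) /= in search.
rewrite -cat_rcons; apply: IH; rewrite ?cat_rcons //.
by move/allP: search; apply; rewrite mem_iota.
Qed.

(* A coloring [s] of [n] vertices can be renamed into one with colors below [n]. *)
Lemma proper_all_index s l : all (triple_lt (size s)) l ->
  proper_all s l = proper_all (map (index^~ s) s) l.
Proof.
move=> ls; apply: eq_in_all => t /(allP ls) /and3P[t1 t2 t3].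
have index_nth i j : i < size s -> j < size s ->
    (index (nth 0 s i) s == index (nth 0 s j) s) = (nth 0 s i == nth 0 s j).
  move=> si sj; apply/eqP/eqP => [|-> //].
  exact: index_inj (mem_nth 0 si) (mem_nth 0 sj).
by rewrite /proper_at !(nth_map 0) // !proper3E !index_nth.
Qed.

Lemma forcesP n l F : all (triple_lt n) l -> all (triple_lt n) F -> forces n l F ->
  forall s, size s = n -> proper_all s l -> proper_all s F.
Proof.
move=> ln Fn search s size_s proper_l.
rewrite proper_all_index ?size_s //.
apply: (forces_fromP search); first by rewrite size_map.
  by apply/allP=> _ /mapP[v vs ->]; rewrite -size_s index_mem.
by apply: proper_all_known; rewrite -proper_all_index ?size_s.
Qed.

Definition edge_proper (T : finType) (f : T -> nat) (e : {set T}) :=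
  1 < size (undup [seq f v | v <- enum e]) < #|e|.

Lemma colorable_edge_proper (T : finType) (E : {set {set T}}) (f : T -> nat) :
  (forall e, e \in E -> edge_proper f e) -> colorable E.
Proof. by exists f. Qed.
Arguments colorable_edge_proper {T E} f.

Lemma colorable_subset (T : finType) (E1 E2 : {set {set T}}) :
  E1 \subset E2 -> colorable E2 -> colorable E1.
Proof. by move=> /subsetP sub [f fE]; exists f => e /sub /fE. Qed.

Lemma eq_edge_proper (T : finType) (f g : T -> nat) (e : {set T}) :
  f =1 g -> edge_proper f e = edge_proper g e.
Proof. by move=> fg; rewrite /edge_proper (eq_map fg). Qed.

Lemma edge_proper_imset (T T' : finType) (h : T -> T') (f : T' -> nat) (e : {set T}) :
  injective h -> edge_proper f (h @: e) = edge_proper (f \o h) e.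
Proof.
move=> h_inj.
have same : [seq f v | v <- enum (h @: e)] =i [seq (f \o h) u | u <- enum e].
  move=> c; apply/mapP/mapP => [[_ /[!mem_enum] /imsetP[u ue ->] ->]|[u]].
    by exists u; rewrite ?mem_enum.
  by rewrite mem_enum => ue ->; exists (h u); rewrite ?mem_enum ?imset_f.
by rewrite /edge_proper card_imset // (perm_size (perm_undup same)).
Qed.

Lemma card_set3 (T : finType) (p q r : T) : uniq [:: p; q; r] -> #|[set p; q; r]| = 3.
Proof.
rewrite /= !inE negb_or => /and3P[/andP[pq pr] qr _].
by rewrite -setUA cardsU1 cards2 !inE negb_or pq pr qr.
Qed.

Lemma edge_proper3 (T : finType) (f : T -> nat) (p q r : T) :
  uniq [:: p; q; r] -> edge_proper f [set p; q; r] = proper3 (f p) (f q) (f r).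
Proof.
move=> pqr.
have same : [seq f v | v <- enum [set p; q; r]] =i [:: f p; f q; f r].
  move=> c; rewrite !inE; apply/mapP/idP => [[v]|].
    by rewrite mem_enum !inE -orbA => /or3P[]/eqP-> ->; rewrite eqxx ?orbT.
  by move=> /or3P[]/eqP->; [exists p|exists q|exists r]; rewrite // mem_enum !inE eqxx ?orbT.
by rewrite /edge_proper card_set3 // /proper3 (perm_size (perm_undup same)).
Qed.

Definition edge_at (T : finType) (x0 : T) (W : seq T) (t : triple) : {set T} :=
  [set nth x0 W t.1.1; nth x0 W t.1.2; nth x0 W t.2].

Definition edges_at (T : finType) (x0 : T) (W : seq T) (l : seq triple) : {set {set T}} :=
  [set e in map (edge_at x0 W) l].

Section EdgesAt.
Variables (T : finType) (x0 : T) (W : seq T).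
Hypothesis W_uniq : uniq W.

Lemma uniq_edge_at t : triple_uniq (size W) t ->
  uniq [:: nth x0 W t.1.1; nth x0 W t.1.2; nth x0 W t.2].
Proof.
case/andP=> /and3P[t1 t2 t3] t_uniq.
by move: t_uniq; rewrite /= !inE !nth_uniq.
Qed.

Lemma card_edge_at t : triple_uniq (size W) t -> #|edge_at x0 W t| = 3.
Proof. by move/uniq_edge_at; apply: card_set3. Qed.

Lemma edge_proper_at f t : triple_uniq (size W) t ->
  edge_proper f (edge_at x0 W t) = proper_at (map f W) t.
Proof.
move=> tW; rewrite /edge_at edge_proper3 ?uniq_edge_at //.
by case/andP: tW => /and3P[t1 t2 t3] _; rewrite /proper_at !(nth_map x0).
Qed.

Lemma edges_atP l e :
  reflect (exists2 t, t \in l & e = edge_at x0 W t) (e \in edges_at x0 W l).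
Proof. by rewrite inE; apply: mapP. Qed.

Lemma edge_at_in l t : t \in l -> edge_at x0 W t \in edges_at x0 W l.
Proof. by move=> tl; rewrite inE map_f. Qed.

Lemma card_edges_at l : #|edges_at x0 W l| <= size l.
Proof. by rewrite cardsE -(size_map (edge_at x0 W)) card_size. Qed.

End EdgesAt.

Definition critical3 (T : finType) (E : {set {set T}}) :=
  [/\ uniform 3 E, (forall v : T, exists2 e, e \in E & v \in e), ~ colorable E &
      forall e, e \in E -> colorable (E :\ e)].

Lemma critical3_minimal_uncolorable (T : finType) (E : {set {set T}}) :
  critical3 E -> minimal_uncolorable [set: T] E.
Proof.
case=> E3 E_cover E_unc E_crit; split; [|split=> //].
  split=> [e _|e e' eE e'E ee']; first exact: subsetT.
  by apply/eqP; rewrite eqEcard ee' !E3.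
move=> V' E' [[V'E' _] [_ E'E]] neq.
have [E'_eq|] := eqVneq E' E.
  case: neq; congr (_, _); last exact: E'_eq.
  apply/setP=> v; rewrite inE; case: (E_cover v) => e eE ve.
  by rewrite E'_eq in V'E'; apply: (subsetP (V'E' e eE)).
rewrite eqEsubset E'E /= => /subsetPn[e eE eE'].
apply: colorable_subset (E_crit e eE); apply/subsetP=> d dE'.
by rewrite !inE (subsetP E'E d dE') andbT; apply: contraNneq eE' => <-.
Qed.

Lemma critical3_edge (T : finType) (E : {set {set T}}) (v : T) : critical3 E ->
  exists a b c, uniq [:: a; b; c] /\ [set a; b; c] \in E.
Proof.
case=> E3 E_cover _ _; case: (E_cover v) => e eE _.
have /card_gt2P[a [b [c [[ae be ce] [ab bc ca]]]]] : 2 < #|e| by rewrite E3.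
have abc : uniq [:: a; b; c] by rewrite /= !inE negb_or ab bc eq_sym ca.
exists a, b, c; split=> //; suff -> : [set a; b; c] = e by [].
apply/eqP; rewrite eqEcard card_set3 // E3 // leqnn andbT.
by apply/subsetP=> u; rewrite !inE -orbA => /or3P[]/eqP->.
Qed.

(* On the vertices [a; b; c; x; y; z] (indices 0..5) the gadget has edges
   abx, aby, abz, cxy, cxz and xyz. *)
Definition gadget : seq triple :=
  [:: (0, 1, 3); (0, 1, 4); (0, 1, 5); (2, 3, 4); (2, 3, 5); (3, 4, 5)].

Lemma gadget_forces s : size s = 6 -> proper_all s gadget ->
  proper3 (nth 0 s 0) (nth 0 s 1) (nth 0 s 2).
Proof.
move=> s6 proper_s.
have forced : forces 6 gadget [:: (0, 1, 2)] by vm_compute.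
have := @forcesP 6 gadget [:: (0, 1, 2)] isT isT forced s s6 proper_s.
by rewrite /proper_all /= andbT.
Qed.

Lemma gadget_extends a b c : proper3 a b c ->
  exists x y z, proper_all [:: a; b; c; x; y; z] gadget.
Proof.
rewrite proper3E /proper_all /proper_at /=.
case: (eqVneq a b) => [<-|ab]; case: (eqVneq a c) => [<-|ac] //= abc.
- by exists c, (a + c).+1, (a + c).+1; rewrite !proper3E; lia.
- by exists a, b, b; rewrite !proper3E; lia.
- by exists a, a, b; rewrite !proper3E; lia.
Qed.

Lemma gadget_extends_minus a b c : ~~ proper3 a b c -> forall t, t \in gadget ->
  exists x y z, proper_all [:: a; b; c; x; y; z] (filter (predC1 t) gadget).
Proof.
rewrite proper3E => abc t.
have [[-> ->]|[ab [bc ac]]] : (b = a /\ c = a) \/ (a != b /\ b != c /\ a != c) by lia.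
- rewrite !inE => /orP[|/orP[|/orP[|/orP[|/orP[|]]]]] /eqP->;
    [ exists a, a.+1, a.+1 | exists a.+1, a, a.+1 | exists a.+1, a.+1, a
    | exists a.+1, a.+2, a.+1 | exists a.+1, a.+1, a.+2 | exists a.+1, a.+1, a.+1 ];
    by rewrite /proper_all /proper_at /= !proper3E; lia.
- rewrite !inE => /orP[|/orP[|/orP[|/orP[|/orP[|]]]]] /eqP->;
    [ exists c, a, a | exists a, c, a | exists a, a, c
    | exists a, b, a | exists a, a, b | exists a, a, a ];
    by rewrite /proper_all /proper_at /= !proper3E; lia.
Qed.

Section GadgetReplacement.

Variables (T T' : finType) (h : T -> T') (x y z : T').
Hypothesis h_inj : injective h.
Hypothesis h_fresh : forall u, h u \notin [:: x; y; z].
Hypothesis xyz_uniq : uniq [:: x; y; z].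
Hypothesis h_onto : forall v, v \notin [:: x; y; z] -> v \in codom h.

Variables (E : {set {set T}}) (a b c : T).
Hypothesis abc_uniq : uniq [:: a; b; c].
Hypothesis abcE : [set a; b; c] \in E.
Hypothesis E_crit : critical3 E.

Let W := [:: h a; h b; h c; x; y; z].

Definition gadget_replacement : {set {set T'}} :=
  [set h @: e | e : {set T} in E :\ [set a; b; c]] :|: edges_at x W gadget.

Let h_neq u : [/\ h u != x, h u != y & h u != z].
Proof. by have := h_fresh u; rewrite !inE !negb_or => /and3P. Qed.

Let hx u : (h u == x) = false. Proof. by case: (h_neq u) => /negbTE. Qed.
Let hy u : (h u == y) = false. Proof. by case: (h_neq u) => _ /negbTE. Qed.
Let hz u : (h u == z) = false. Proof. by case: (h_neq u) => _ _ /negbTE. Qed.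

Let W_uniq : uniq W.
Proof.
rewrite -[W]/(map h [:: a; b; c] ++ [:: x; y; z]) cat_uniq map_inj_uniq //.
rewrite abc_uniq xyz_uniq andbT andTb; apply/hasPn => v vxyz.
by apply/negP => /mapP[u _ vu]; move: (h_fresh u); rewrite -vu vxyz.
Qed.

Let gadget_uniq t : t \in gadget -> triple_uniq (size W) t.
Proof. by move: t; apply/allP. Qed.

Let gadget_edge_proper f t : t \in gadget ->
  edge_proper f (edge_at x W t) = proper_at (map f W) t.
Proof. by move/gadget_uniq; apply: edge_proper_at. Qed.

Let gadget_edge_in t : t \in gadget -> edge_at x W t \in gadget_replacement.
Proof. by move=> tg; rewrite inE edge_at_in ?orbT. Qed.

Let image_edge_in e : e \in E -> e != [set a; b; c] -> h @: e \in gadget_replacement.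
Proof. by move=> eE ne; rewrite inE imset_f // !inE ne. Qed.

Definition extend (g : T -> nat) (p q r : nat) (v : T') : nat :=
  if v == x then p else if v == y then q else if v == z then r else
  if [pick u | h u == v] is Some u then g u else 0.

Let extend_h g p q r u : extend g p q r (h u) = g u.
Proof.
rewrite /extend hx hy hz; case: pickP => [u' /eqP /h_inj -> //|/(_ u)].
by rewrite eqxx.
Qed.

Let map_extend g p q r : map (extend g p q r) W = [:: g a; g b; g c; p; q; r].
Proof.
move: xyz_uniq; rewrite /= !inE negb_or andbT => /andP[/andP[xy xz] yz].
by rewrite !extend_h /extend !eqxx -!(eq_sym x) (negbTE xy) (negbTE xz)
  -(eq_sym y) (negbTE yz).
Qed.

Lemma gadget_replacement_uniform : uniform 3 gadget_replacement.
Proof.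
case: E_crit => E3 _ _ _.
move=> d; rewrite inE => /orP[/imsetP[e /setD1P[_ eE] ->]|/edges_atP[t tg ->]].
  by rewrite card_imset // E3.
exact: card_edge_at (gadget_uniq tg).
Qed.

Lemma gadget_replacement_covers v : exists2 d, d \in gadget_replacement & v \in d.
Proof.
case: E_crit => _ E_cover _ _.
have [vxyz|/h_onto/codomP[u ->]] := boolP (v \in [:: x; y; z]).
  exists (edge_at x W (3, 4, 5)); first exact: gadget_edge_in.
  by move: vxyz; rewrite /edge_at /= !inE -orbA.
case: (E_cover u) => e eE ue; have [e_abc|ne] := eqVneq e [set a; b; c].
  move: ue; rewrite e_abc !inE -orbA => /or3P[]/eqP->;
    [exists (edge_at x W (0, 1, 3))|exists (edge_at x W (0, 1, 3))
    |exists (edge_at x W (2, 3, 4))];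
    by rewrite ?gadget_edge_in // /edge_at /= !inE eqxx ?orbT.
by exists (h @: e); rewrite ?image_edge_in ?imset_f.
Qed.

Lemma gadget_replacement_uncolorable : ~ colorable gadget_replacement.
Proof.
case: E_crit => _ _ E_unc _ [f f_proper]; apply: E_unc.
apply: (colorable_edge_proper (f \o h)) => e eE.
have [->|ne] := eqVneq e [set a; b; c]; last first.
  by rewrite -edge_proper_imset //; apply: f_proper; apply: image_edge_in.
have f_gadget : proper_all (map f W) gadget.
  by apply/allP=> t tg; rewrite -gadget_edge_proper //; apply/f_proper/gadget_edge_in.
by rewrite edge_proper3 //; apply: (gadget_forces (size_map f W) f_gadget).
Qed.

Lemma gadget_replacement_image_edge_critical e : e \in E -> e != [set a; b; c] ->
  colorable (gadget_replacement :\ h @: e).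
Proof.
case: E_crit => _ _ _ E_crit' eE ne; case: (E_crit' e eE) => g g_proper.
have g_abc : proper3 (g a) (g b) (g c).
  by rewrite -edge_proper3 //; apply: g_proper; rewrite !inE eq_sym ne abcE.
case: (gadget_extends g_abc) => p [q [r pqr]].
apply: (colorable_edge_proper (extend g p q r)) => d.
rewrite in_setD1 in_setU => /andP[nd /orP[/imsetP[e' e'E]|/edges_atP[t tg]] d_def]; subst d.
  rewrite edge_proper_imset // (@eq_edge_proper _ _ g _ (extend_h g p q r)).
  apply/g_proper/setD1P; split; last by case/setD1P: e'E.
  by apply: contraNneq nd => ->.
by rewrite gadget_edge_proper // map_extend; apply: (allP pqr).
Qed.

Lemma gadget_replacement_gadget_edge_critical t : t \in gadget ->
  colorable (gadget_replacement :\ edge_at x W t).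
Proof.
case: E_crit => _ _ E_unc E_crit' tg; case: (E_crit' _ abcE) => g g_proper.
have g_abc : ~~ proper3 (g a) (g b) (g c).
  apply/negP=> g_abc; apply: E_unc; apply: (colorable_edge_proper g) => e eE.
  have [->|ne] := eqVneq e [set a; b; c]; first by rewrite edge_proper3.
  by apply: g_proper; rewrite !inE ne.
case: (gadget_extends_minus g_abc tg) => p [q [r pqr]].
apply: (colorable_edge_proper (extend g p q r)) => d.
rewrite in_setD1 in_setU => /andP[nd /orP[/imsetP[e eE]|/edges_atP[t' t'g]] d_def]; subst d.
  by rewrite edge_proper_imset // (@eq_edge_proper _ _ g _ (extend_h g p q r)); apply: g_proper.
rewrite gadget_edge_proper // map_extend; apply: (allP pqr).
by rewrite mem_filter t'g andbT /=; apply: contraNneq nd => ->.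
Qed.

Lemma critical3_gadget_replacement : critical3 gadget_replacement.
Proof.
split.
- exact: gadget_replacement_uniform.
- exact: gadget_replacement_covers.
- exact: gadget_replacement_uncolorable.
move=> d; rewrite inE => /orP[/imsetP[e /setD1P[ne eE] ->]|/edges_atP[t tg ->]].
  exact: gadget_replacement_image_edge_critical.
exact: gadget_replacement_gadget_edge_critical.
Qed.

Lemma card_gadget_replacement : #|gadget_replacement| <= #|E| + 5.
Proof.
apply: leq_trans (leq_card_setU _ _) _.
apply: leq_trans (leq_add (leq_imset_card _ _) (card_edges_at _ _ _)) _.
by rewrite (cardsD1 [set a; b; c] E) abcE [1 + _]addnC -addnA.
Qed.

End GadgetReplacement.

Definition covers_all k (l : seq triple) :=
  all (fun i => has (fun t => i \in [:: t.1.1; t.1.2; t.2]) l) (iota 0 k).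

(* [l] is uncolorable iff it forces the never properly colored triple (0, 0, 0);
   [cols] lists, for each triple [t] of [l], a coloring of [l] minus [t]. *)
Definition critical_certificate k (l : seq triple) (cols : seq (seq nat)) :=
  [&& all (triple_uniq k) l, covers_all k l, forces k l [:: (0, 0, 0)] &
      all (fun t => proper_all (nth [::] cols (index t l)) (filter (predC1 t) l)) l].

Lemma critical3_edges_at (T : finType) (x0 : T) (W : seq T) l cols :
  uniq W -> (forall v, v \in W) -> critical_certificate (size W) l cols ->
  critical3 (edges_at x0 W l).
Proof.
move=> W_uniq W_all /and4P[l_uniq l_covers l_forces l_crit].
have l_edge_proper (f : T -> nat) (t : triple) : t \in l ->
    edge_proper f (edge_at x0 W t) = proper_at (map f W) t.
  by move/(allP l_uniq); apply: edge_proper_at.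
split.
- by move=> e /edges_atP[t /(allP l_uniq) tW ->]; apply: card_edge_at.
- move=> v; have iv : index v W \in iota 0 (size W).
    by rewrite mem_iota add0n index_mem W_all.
  case/hasP: (allP l_covers _ iv) => t tl vt.
  exists (edge_at x0 W t); first exact: edge_at_in.
  rewrite -(nth_index x0 (W_all v)); move: vt; rewrite !inE -orbA.
  by case/or3P=> /eqP->; rewrite eqxx ?orbT.
- move=> [f f_proper].
  have W_gt0 : 0 < size W.
    by rewrite lt0n size_eq0; apply: contraTneq (W_all x0) => ->.
  have l_lt : all (triple_lt (size W)) l by apply/allP=> t /(allP l_uniq) /andP[].
  have l_proper : proper_all (map f W) l.
    by apply/allP=> t tl; rewrite -l_edge_proper //; apply/f_proper/edge_at_in.
  have lt0 : all (triple_lt (size W)) [:: (0, 0, 0)] by rewrite /= /triple_lt W_gt0.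
  have := forcesP l_lt lt0 l_forces (size_map f W) l_proper.
  by rewrite /proper_all /= /proper_at proper3E eqxx.
move=> d /edges_atP[t tl ->]; set c := nth [::] cols (index t l).
apply: (colorable_edge_proper (fun v => nth 0 c (index v W))) => d'.
rewrite in_setD1 => /andP[nd /edges_atP[t' t'l d'_def]]; subst d'.
have /andP[t'W _] := allP l_uniq t' t'l; rewrite l_edge_proper //.
rewrite (@proper_at_eq _ c (size W)) // => [|i iW]; last first.
  by rewrite (nth_map x0) // index_uniq.
apply: (allP (allP l_crit t tl)); rewrite mem_filter t'l andbT /=.
by apply: contraNneq nd => ->.
Qed.

Lemma critical3_ord_add3 n (E : {set {set 'I_n}}) : 0 < n -> critical3 E ->
  exists2 E' : {set {set 'I_n.+3}}, critical3 E' & #|E'| <= #|E| + 5.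
Proof.
move=> n_gt0 E_crit.
have [a [b [c [abc abcE]]]] := critical3_edge (Ordinal n_gt0) E_crit.
have le_n3 : n <= n.+3 by rewrite !leqW.
pose h := widen_ord le_n3.
pose x : 'I_n.+3 := inord n; pose y : 'I_n.+3 := inord n.+1; pose z : 'I_n.+3 := inord n.+2.
have vx : x = n :> nat by rewrite /x inordK //; lia.
have vy : y = n.+1 :> nat by rewrite /y inordK //; lia.
have vz : z = n.+2 :> nat by rewrite /z inordK //; lia.
have h_inj : injective h by move=> u v /(congr1 val) /= /val_inj.
have h_fresh u : h u \notin [:: x; y; z].
  by rewrite !inE -!val_eqE /= vx vy vz; have := ltn_ord u; lia.
have xyz_uniq : uniq [:: x; y; z] by rewrite /= !inE -!val_eqE /= vx vy vz; lia.
have h_onto v : v \notin [:: x; y; z] -> v \in codom h.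
  rewrite !inE -!val_eqE /= vx vy vz => v_old; apply/codomP.
  have v_lt : v < n by have := ltn_ord v; lia.
  by exists (Ordinal v_lt); apply: val_inj.
exists (gadget_replacement h x y z E a b c).
  exact: critical3_gadget_replacement.
exact: card_gadget_replacement.
Qed.

Definition critical_bound n :=
  exists E : {set {set 'I_n}}, critical3 E /\ 3 * #|E| <= 7 * n - 12.

Lemma critical_bound_add3 n : 6 <= n -> critical_bound n -> critical_bound n.+3.
Proof.
move=> n_ge6 [E [E_crit E_card]].
have [|E' E'_crit E'_card] := critical3_ord_add3 _ E_crit; first by lia.
by exists E'; split => //; lia.
Qed.

Lemma critical_bound_certificate n l cols : 0 < n -> critical_certificate n l cols ->
  3 * size l <= 7 * n - 12 -> critical_bound n.
Proof.
case: n => // n _ cert size_l.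
exists (edges_at ord0 (enum 'I_n.+1) l); split.
  apply: (@critical3_edges_at _ _ _ l cols); rewrite ?enum_uniq ?size_enum_ord //.
  by move=> v; rewrite mem_enum.
by apply: leq_trans size_l; rewrite leq_mul2l card_edges_at orbT.
Qed.

Definition edges6 : seq triple :=
  [:: (0, 1, 2); (0, 1, 3); (0, 1, 4); (0, 2, 3); (0, 2, 5); (0, 4, 5); (1, 2, 4);
     (1, 2, 5); (1, 3, 5); (2, 3, 4)].

Definition colorings6 : seq (seq nat) :=
  [:: [:: 0; 0; 0; 1; 1; 1]; [:: 0; 0; 1; 0; 1; 1]; [:: 0; 0; 1; 1; 0; 1];
     [:: 0; 0; 1; 2; 1; 0]; [:: 0; 1; 0; 1; 1; 0]; [:: 0; 1; 1; 0; 0; 0];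
     [:: 0; 0; 1; 1; 2; 0]; [:: 0; 1; 0; 1; 0; 2]; [:: 0; 1; 0; 1; 0; 1];
     [:: 0; 0; 1; 1; 1; 0]].

Definition edges7 : seq triple :=
  [:: (0, 1, 4); (0, 2, 5); (0, 3, 6); (1, 2, 3); (1, 2, 6); (1, 3, 6); (1, 4, 5);
     (2, 3, 4); (2, 3, 6); (2, 4, 5); (2, 4, 6); (4, 5, 6)].

Definition colorings7 : seq (seq nat) :=
  [:: [:: 0; 0; 0; 1; 0; 1; 1]; [:: 0; 0; 0; 1; 1; 0; 1]; [:: 0; 1; 1; 0; 0; 1; 0];
     [:: 0; 1; 1; 1; 0; 1; 0]; [:: 0; 0; 0; 1; 1; 1; 0]; [:: 0; 1; 0; 1; 0; 1; 1];
     [:: 0; 1; 0; 1; 1; 1; 0]; [:: 0; 0; 1; 1; 1; 0; 0]; [:: 0; 1; 2; 2; 0; 0; 2];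
     [:: 0; 1; 0; 0; 1; 2; 1]; [:: 0; 0; 1; 0; 1; 0; 1]; [:: 0; 0; 0; 1; 1; 1; 1]].

Definition edges8 : seq triple :=
  [:: (0, 1, 2); (0, 1, 7); (0, 2, 4); (0, 2, 5); (0, 3, 7); (1, 2, 5); (1, 3, 4);
     (2, 3, 7); (2, 5, 6); (2, 6, 7); (3, 5, 6); (4, 5, 6); (4, 5, 7)].

Definition colorings8 : seq (seq nat) :=
  [:: [:: 0; 0; 0; 0; 1; 1; 0; 2]; [:: 0; 0; 1; 1; 0; 1; 0; 0]; [:: 0; 0; 1; 2; 2; 1; 2; 2];
     [:: 0; 1; 0; 0; 1; 0; 1; 1]; [:: 0; 0; 1; 1; 0; 0; 1; 2]; [:: 0; 1; 1; 0; 0; 1; 0; 1];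
     [:: 0; 0; 1; 0; 0; 1; 0; 1]; [:: 0; 0; 1; 1; 0; 1; 0; 1]; [:: 0; 0; 1; 2; 0; 0; 2; 2];
     [:: 0; 0; 1; 0; 1; 0; 1; 1]; [:: 0; 0; 1; 0; 1; 0; 0; 1]; [:: 0; 1; 0; 1; 2; 1; 0; 1];
     [:: 0; 0; 1; 0; 1; 1; 0; 1]].

Lemma critical_bound6 : critical_bound 6.
Proof. by apply: (@critical_bound_certificate _ edges6 colorings6); vm_compute. Qed.

Lemma critical_bound7 : critical_bound 7.
Proof. by apply: (@critical_bound_certificate _ edges7 colorings7); vm_compute. Qed.

Lemma critical_bound8 : critical_bound 8.
Proof. by apply: (@critical_bound_certificate _ edges8 colorings8); vm_compute. Qed.

Lemma critical_bound_ge6 n : 6 <= n -> critical_bound n.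
Proof.
elim/ltn_ind: n => n IH n_ge6; have [n_le8|n_gt8] := leqP n 8.
  have : n \in [:: 6; 7; 8] by rewrite !inE; lia.
  rewrite !inE => /or3P[]/eqP->;
    [exact: critical_bound6|exact: critical_bound7|exact: critical_bound8].
have -> : n = (n - 3).+3 by lia.
by apply: critical_bound_add3; [lia|apply: IH; lia].
Qed.

Unset Implicit Arguments.
Theorem theorem1p3 (n : nat) (hn : 6 <= n) :
  (exists E : {set {set 'I_n}}, in_MUC 3 E) /\
  (exists E : {set {set 'I_n}}, in_MUC 3 E /\ 3 * #|E| <= 7 * n - 12).
Proof.
have [E [E_crit E_card]] := critical_bound_ge6 hn.
have E_MUC : in_MUC 3 E by split; [case: E_crit|exact: critical3_minimal_uncolorable].
by split; exists E.
Qed.
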